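(* Let $(A,\cdot,\alpha,R)$ be a Hom-associative Rota-Baxter algebra where $R$ is a Rota-Baxter operator of weight $-1$, i.e. $R(x)\cdot R(y)=R(R(x)\cdot y+x\cdot R(y)-x\cdot y)$, and assume $\alpha\circ R=R\circ\alpha$. Define $x\ast y=R(x)\cdot y-y\cdot R(x)-x\cdot y$. Then $(A,\ast,\alpha)$ is a left Hom-preLie algebra.
   Context: $\mathbb{K}$ is an algebraically closed field of characteristic $0$. A Hom-associative algebra is a triple $(A,\cdot,\alpha)$ with $\alpha(x)\cdot(y\cdot z)=(x\cdot y)\cdot\alpha(z)$ for all $x,y,z$. A Hom-associative Rota-Baxter algebra of weight $\theta\in\mathbb{K}$ is a quadruple $(A,\cdot,\alpha,R)$ with $(A,\cdot,\alpha)$ Hom-associative and $R:A\to A$ linear satisfying $R(x)\cdot R(y)=R(R(x)\cdot y+x\cdot R(y)+\theta\,x\cdot y)$ for all $x,y$. A left Hom-preLie algebra is a triple $(A,\ast,\alpha)$ with $\alpha(x)\ast(y\ast z)-(x\ast y)\ast\alpha(z)=\alpha(y)\ast(x\ast z)-(y\ast x)\ast\alpha(z)$ for all $x,y,z$. *)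

From HB Require Import structures.
From mathcomp Require Import all_boot all_order all_algebra.
Set Implicit Arguments. Unset Strict Implicit. Unset Printing Implicit Defensive.
Import GRing.Theory.
Local Open Scope ring_scope.

Definition bilinear_mul (K : fieldType) (A : lmodType K) (mul : A -> A -> A) :=
  (forall a x y z, mul (a *: x + y) z = a *: mul x z + mul y z) /\
  (forall a x y z, mul x (a *: y + z) = a *: mul x y + mul x z).

Definition hom_associative (K : fieldType) (A : lmodType K)
  (mul : A -> A -> A) (alpha : A -> A) :=
  forall x y z, mul (alpha x) (mul y z) = mul (mul x y) (alpha z).

Definition rota_baxter (K : fieldType) (A : lmodType K)
  (mul : A -> A -> A) (R : A -> A) (theta : K) :=
  forall x y, mul (R x) (R y) = R (mul (R x) y + mul x (R y) + theta *: mul x y).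

Definition hom_assoc_RB_algebra (K : fieldType) (A : lmodType K)
  (mul : A -> A -> A) (alpha : {linear A -> A}) (R : {linear A -> A}) (theta : K) :=
  bilinear_mul mul /\ hom_associative mul alpha /\ rota_baxter mul R theta.

Definition left_hom_preLie (K : fieldType) (A : lmodType K)
  (mul : A -> A -> A) (alpha : A -> A) :=
  forall x y z,
    mul (alpha x) (mul y z) - mul (mul x y) (alpha z) =
    mul (alpha y) (mul x z) - mul (mul y x) (alpha z).

Definition star_prod (K : fieldType) (A : lmodType K)
  (mul : A -> A -> A) (R : A -> A) (x y : A) : A :=
  mul (R x) y - mul y (R x) - mul x y.

(* Write x * y = [R x, y] + theta x y with [u, v] = u v - v u.  Using only
   Hom-associativity and alpha R = R alpha, the difference of the Hom-associators
   of * at (x, y, z) and (y, x, z) expands to [[R x, R y], alpha z]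
   - [R (x * y - y * x), alpha z]; the terms involving both R x and R y cancel by the
   Hom-Jacobi identity of the commutator, the others by Hom-associativity.  The
   Rota-Baxter identity of weight theta says exactly R (x * y - y * x) = [R x, R y],
   so the difference vanishes.  The product of the statement is the case
   theta = -1. *)

From HB Require Import structures.
From mathcomp Require Import all_boot all_order all_algebra.
Import GRing.Theory.
Local Open Scope ring_scope.
Set Implicit Arguments. Unset Strict Implicit.

Inductive zexpr := ZAtom of nat | ZAdd of zexpr & zexpr | ZOpp of zexpr | ZZero.

Fixpoint zeval (V : zmodType) (env : seq V) (e : zexpr) : V :=
  match e with
  | ZAtom n => env`_n
  | ZAdd a b => zeval env a + zeval env b
  | ZOpp a => - zeval env a
  | ZZero => 0
  end.

Fixpoint zcoef (e : zexpr) (i : nat) : int :=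
  match e with
  | ZAtom n => (i == n)%:Z
  | ZAdd a b => zcoef a i + zcoef b i
  | ZOpp a => - zcoef a i
  | ZZero => 0
  end.

Fixpoint zatoms_below (N : nat) (e : zexpr) : bool :=
  match e with
  | ZAtom n => (n < N)%N
  | ZAdd a b => zatoms_below N a && zatoms_below N b
  | ZOpp a => zatoms_below N a
  | ZZero => true
  end.

Lemma zeval_sum (V : zmodType) (env : seq V) N e : zatoms_below N e ->
  zeval env e = \sum_(i < N) env`_i *~ zcoef e i.
Proof.
elim: e => [n|a IHa b IHb|a IHa|] /=.
- move=> ltnN; rewrite (bigD1 (Ordinal ltnN)) //= eqxx mulr1z big1 ?addr0 //.
  move=> i neq_in; suff /negbTE -> : (i : nat) != n by rewrite mulr0z.
  by apply: contraNneq neq_in => eq_in; apply/eqP/val_inj.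
- by case/andP=> /IHa -> /IHb ->; rewrite -big_split; apply: eq_bigr => i _; rewrite mulrzDr.
- by move=> /IHa ->; rewrite -sumrN; apply: eq_bigr => i _; rewrite mulrNz.
- by move=> _; rewrite big1 // => i _; rewrite mulr0z.
Qed.

Definition zcheck (N : nat) (e1 e2 : zexpr) : bool :=
  [&& zatoms_below N e1, zatoms_below N e2 &
      all (fun i => zcoef e1 i == zcoef e2 i) (iota 0 N)].

Lemma zeval_eq (V : zmodType) (env : seq V) e1 e2 :
  zcheck (size env) e1 e2 -> zeval env e1 = zeval env e2.
Proof.
case/and3P=> below1 below2 /allP same_coef.
rewrite (zeval_sum env below1) (zeval_sum env below2); apply: eq_bigr => i _.
by rewrite (eqP (same_coef i _)) // mem_iota ltn_ord.
Qed.

Ltac zhead t := lazymatch t with ?f _ => zhead f | _ => t end.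

(* Atoms are identified up to unification (rewriting may leave different
   structure instances in otherwise equal terms), but unification is only
   attempted between terms with the same head symbol: failing unifications
   of unrelated terms are prohibitively slow. *)
Ltac zindex t env :=
  lazymatch env with
  | ?u :: ?env' =>
      let ht := zhead t in
      let hu := zhead u in
      match constr:(tt) with
      | _ => lazymatch hu with ht => let _ := constr:(erefl t : t = u) in constr:(0%N) end
      | _ => let n := zindex t env' in constr:(n.+1)
      end
  end.

Ltac zcollect t env :=
  lazymatch t with
  | (?a + ?b)%R => let env := zcollect a env in zcollect b env
  | (- ?a)%R => zcollect a env
  | 0%R => env
  | _ => match constr:(tt) with
         | _ => let _ := zindex t env in env
         | _ => constr:(t :: env)
         end
  end.

Ltac zreify t env :=
  lazymatch t with
  | (?a + ?b)%R => let a := zreify a env in let b := zreify b env in constr:(ZAdd a b)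
  | (- ?a)%R => let a := zreify a env in constr:(ZOpp a)
  | 0%R => constr:(ZZero)
  | _ => let n := zindex t env in constr:(ZAtom n)
  end.

(* Decides equalities in an abelian group that hold by the axioms of abelian
   groups alone, treating every subterm not built from [+], [-], [0] as an atom;
   the initial simplification unfolds additive-morphism coercions hiding [-]. *)
Ltac zmodule :=
  rewrite /=;
  lazymatch goal with |- @eq ?V ?l ?r =>
    let env := zcollect l (@nil V) in
    let env := zcollect r env in
    let el := zreify l env in
    let er := zreify r env in
    change (zeval env el = zeval env er); apply: zeval_eq; vm_compute; reflexivity
  end.

Section BilinearProduct.

Variables (K : fieldType) (A : lmodType K) (mul : A -> A -> A).
Hypothesis mul_bilinear : bilinear_mul mul.

Lemma bmulDl x y z : mul (x + y) z = mul x z + mul y z.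
Proof. by have := mul_bilinear.1 1 x y z; rewrite !scale1r. Qed.

Lemma bmulDr x y z : mul x (y + z) = mul x y + mul x z.
Proof. by have := mul_bilinear.2 1 x y z; rewrite !scale1r. Qed.

Lemma bmul0l z : mul 0 z = 0.
Proof. by apply/(addrI (mul 0 z)); rewrite -bmulDl !addr0. Qed.

Lemma bmul0r x : mul x 0 = 0.
Proof. by apply/(addrI (mul x 0)); rewrite -bmulDr !addr0. Qed.

Lemma bmulNl x z : mul (- x) z = - mul x z.
Proof. by apply/eqP; rewrite -addr_eq0 -bmulDl addNr bmul0l. Qed.

Lemma bmulNr x z : mul x (- z) = - mul x z.
Proof. by apply/eqP; rewrite -addr_eq0 -bmulDr addNr bmul0r. Qed.

Lemma bmulZl a x z : mul (a *: x) z = a *: mul x z.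
Proof. by rewrite -[a *: x]addr0 mul_bilinear.1 bmul0l addr0. Qed.

Lemma bmulZr a x z : mul x (a *: z) = a *: mul x z.
Proof. by rewrite -[a *: z]addr0 mul_bilinear.2 bmul0r addr0. Qed.

Definition bmulE := (bmulDl, bmulDr, bmulNl, bmulNr, bmulZl, bmulZr).

Definition bracket x y := mul x y - mul y x.

Section RotaBaxterStar.

Variables (alpha R : {linear A -> A}) (theta : K).

Definition rb_star x y := bracket (R x) y + theta *: mul x y.

Lemma rb_star_bilinear : bilinear_mul rb_star.
Proof.
split=> a x y z; rewrite /rb_star /bracket ?linearP /= !bmulE !scalerDr ?scalerN
  !scalerA [theta * a]mulrC; zmodule.
Qed.

Definition hom_associator (m : A -> A -> A) x y z :=
  m (alpha x) (m y z) - m (m x y) (alpha z).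

Hypothesis mul_homA : hom_associative mul alpha.
Hypothesis alphaR : forall x, alpha (R x) = R (alpha x).

Lemma hom_associator_rb_star_antisym x y z :
  hom_associator rb_star x y z - hom_associator rb_star y x z =
  bracket (bracket (R x) (R y)) (alpha z)
    - bracket (R (rb_star x y - rb_star y x)) (alpha z).
Proof.
rewrite (raddfB R (rb_star x y)) /hom_associator /rb_star /bracket -!alphaR.
rewrite !bmulE !(scalerDr, scalerN, scalerA) !mul_homA.
zmodule.
Qed.

Hypothesis R_rota_baxter : rota_baxter mul R theta.

Lemma rota_baxter_bracket x y :
  R (rb_star x y - rb_star y x) = bracket (R x) (R y).
Proof.
by rewrite /bracket !R_rota_baxter -linearB /=; congr (R _); rewrite /rb_star /bracket; zmodule.
Qed.

Lemma rb_star_left_hom_preLie : left_hom_preLie rb_star alpha.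
Proof.
move=> x y z; apply/eqP; rewrite -subr_eq0.
by rewrite (hom_associator_rb_star_antisym x y z) rota_baxter_bracket subrr.
Qed.

End RotaBaxterStar.

End BilinearProduct.

Theorem proposition4p2 (K : closedFieldType) (hK : [pchar K] =i pred0)
  (A : lmodType K) (mul : A -> A -> A) (alpha R : {linear A -> A}) :
  hom_assoc_RB_algebra mul alpha R (-1) ->
  (forall x, alpha (R x) = R (alpha x)) ->
  bilinear_mul (star_prod mul R) /\ left_hom_preLie (star_prod mul R) alpha.
Proof.
move=> [mul_bilinear [mul_homA R_rota_baxter]] alphaR.
have starE : star_prod mul R =2 rb_star mul R (-1).
  by move=> x y; rewrite /star_prod /rb_star /bracket scaleN1r.
have [star_linl star_linr] := rb_star_bilinear mul_bilinear R (-1).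
have star_preLie := rb_star_left_hom_preLie mul_bilinear mul_homA alphaR R_rota_baxter.
by split; [split=> a x y z | move=> x y z]; rewrite !starE.
Qed.
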